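(* For every $\epsilon>0$ there is $\epsilon'>0$ depending only on $\epsilon$ such that: if $f:\{0,1\}^n\to\{-1,1\}$ and $B$ is a symmetric $n\times n$ matrix over $\mathbb F_2$ with zero diagonal satisfying $\mathbb E_y\hat{f_y}^2(By)\ge\epsilon$, then there exists a quadratic polynomial function $g$ whose distance from $f$ is at most $\frac12-\epsilon'$.
   Context: $\{0,1\}^n$ is identified with $\mathbb F_2^n$. $\hat h(\alpha)=\mathbb E_z h(z)(-1)^{\langle\alpha,z\rangle}$; $f_y(x)=f(x)f(x+y)$; $y$ uniform. A quadratic polynomial function is $g=(-1)^{P}$ with $P$ an $n$-variate polynomial over $\mathbb F_2$ of degree at most $2$. Distance is the fraction of points where two functions differ. *)

From HB Require Import structures.
From mathcomp Require Import all_boot all_order all_algebra.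
From mathcomp Require Import mpoly.
Set Implicit Arguments. Unset Strict Implicit. Unset Printing Implicit Defensive.
Import Order.TTheory GRing.Theory Num.Theory.
Local Open Scope ring_scope.

(* {0,1}^n is identified with F_2^n = 'rV['F_2]_n. *)

Definition sgnF2 (R : ringType) (b : 'F_2) : R := if b == 0 then 1 else -1.

Definition dotF2 n (a z : 'rV['F_2]_n) : 'F_2 := (a *m z^T) ord0 ord0.

Definition fourier (R : fieldType) n (h : 'rV['F_2]_n -> R) (alpha : 'rV['F_2]_n) : R :=
  (2 ^+ n)^-1 * \sum_(z : 'rV['F_2]_n) h z * sgnF2 R (dotF2 alpha z).

Definition fder (R : ringType) n (f : 'rV['F_2]_n -> R) (y : 'rV['F_2]_n) :=
  fun x : 'rV['F_2]_n => f x * f (x + y).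

(* B y, with y a vector (rows-as-vectors convention: (B y^T)^T) *)
Definition matapp n (B : 'M['F_2]_n) (y : 'rV['F_2]_n) : 'rV['F_2]_n := (B *m y^T)^T.

Definition corrB (R : fieldType) n (f : 'rV['F_2]_n -> R) (B : 'M['F_2]_n) : R :=
  (2 ^+ n)^-1 * \sum_(y : 'rV['F_2]_n) (fourier (fder f y) (matapp B y)) ^+ 2.

(* quadratic polynomial function g = (-1)^P, P in F_2[x_1..x_n] of degree <= 2 *)
Definition quad_poly_fun (R : ringType) n (P : {mpoly 'F_2[n]}) : 'rV['F_2]_n -> R :=
  fun x => sgnF2 R (P.@[fun i => x ord0 i]).

Definition is_quadratic n (P : {mpoly 'F_2[n]}) : bool := (msize P <= 3)%N.

Definition dist (R : numFieldType) n (f g : 'rV['F_2]_n -> R) : R :=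
  #|[set x : 'rV['F_2]_n | f x != g x]|%:R / (2 ^+ n).

From HB Require Import structures.
From mathcomp Require Import all_boot all_order all_algebra.
From mathcomp Require Import mpoly.
From mathcomp Require Import ring lra.
Set Implicit Arguments. Unset Strict Implicit. Unset Printing Implicit Defensive.
Import Order.TTheory GRing.Theory Num.Theory.
Local Open Scope ring_scope.

(* With q(x) = sum_(i<j) B_ij x_i x_j, symmetry and the zero diagonal give the
   polarization q(x+y) = q(x) + q(y) + <By, x>.  Hence twisting f by (-1)^q
   turns hat{f_y}(By) into +- the autocorrelation of h = f (-1)^q at y, and
   E_y hat{f_y}^2(By) = sum_a hat h(a)^4 <= max_a hat h(a)^2 by Parseval.
   So some |hat h(a)| >= eps (as |hat h(a)| <= 1), and (-1)^(q + <a,.> + b), for the right sign b,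
   agrees with f on a fraction (1 + |hat h(a)|)/2 of the points. *)

Lemma F2_cases (a : 'F_2) : a = 0 \/ a = 1.
Proof. by case: a => [[|[|//]] ?]; [left|right]; apply/val_inj. Qed.

Lemma F2_addvv (a : 'F_2) : a + a = 0.
Proof. by case: (F2_cases a) => ->; apply/val_inj. Qed.

Lemma mxF2_addvv m n (x : 'M['F_2]_(m, n)) : x + x = 0.
Proof. by apply/matrixP => i j; rewrite !mxE F2_addvv. Qed.

Lemma mxF2_oppv m n (x : 'M['F_2]_(m, n)) : - x = x.
Proof. by apply/eqP; rewrite eq_sym -addr_eq0 mxF2_addvv. Qed.

Lemma card_rvF2 n : #|{: 'rV['F_2]_n}| = (2 ^ n)%N.
Proof. by rewrite card_mx card_Fp // mul1n. Qed.

Section SignCharacter.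
Variable R : nzRingType.

Lemma sgnF2D (a b : 'F_2) : sgnF2 R (a + b) = sgnF2 R a * sgnF2 R b.
Proof.
by case: (F2_cases a) => ->; case: (F2_cases b) => ->;
  rewrite /sgnF2 /= ?mulr1 ?mul1r ?mulrNN ?mulr1.
Qed.

Lemma sgnF2_mulvv (a : 'F_2) : sgnF2 R a * sgnF2 R a = 1.
Proof. by rewrite -sgnF2D F2_addvv. Qed.

Lemma sgnF2_pm (a : 'F_2) : sgnF2 R a = 1 \/ sgnF2 R a = -1.
Proof. by rewrite /sgnF2; case: ifP; [left|right]. Qed.

End SignCharacter.

Lemma sgnF2_norm (R : realDomainType) (r : R) : exists b, sgnF2 R b * r = `|r|.
Proof.
have [r_lt0 | r_ge0] := ltrP r 0.
  by exists 1; rewrite ltr0_norm // mulN1r.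
by exists 0; rewrite ger0_norm // mul1r.
Qed.

Lemma dotF2E n (a z : 'rV['F_2]_n) : dotF2 a z = \sum_k a 0 k * z 0 k.
Proof. by rewrite /dotF2 !mxE; apply: eq_bigr => k _; rewrite mxE. Qed.

Lemma dotF2C n (a z : 'rV['F_2]_n) : dotF2 a z = dotF2 z a.
Proof. by rewrite !dotF2E; apply: eq_bigr => k _; rewrite mulrC. Qed.

Lemma dotF2Dr n (a z w : 'rV['F_2]_n) : dotF2 a (z + w) = dotF2 a z + dotF2 a w.
Proof. by rewrite !dotF2E -big_split; apply: eq_bigr => k _; rewrite mxE mulrDr. Qed.

Lemma dotF2Dl n (a z w : 'rV['F_2]_n) : dotF2 (z + w) a = dotF2 z a + dotF2 w a.
Proof. by rewrite dotF2C dotF2Dr !(dotF2C _ a). Qed.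

Lemma dotF2r0 n (a : 'rV['F_2]_n) : dotF2 a 0 = 0.
Proof. by rewrite dotF2E big1 // => k _; rewrite mxE mulr0. Qed.

Lemma dotF2_delta n (i : 'I_n) (y : 'rV['F_2]_n) : dotF2 (delta_mx 0 i) y = y 0 i.
Proof.
rewrite dotF2E (bigD1 i) //= big1 ?addr0 => [|k /negbTE ki].
  by rewrite mxE !eqxx mul1r.
by rewrite mxE ki andbF mul0r.
Qed.

Section Fourier.
Variables (R : numFieldType) (n : nat).
Local Notation V := 'rV['F_2]_n.
Local Notation N := ((2 : R) ^+ n).
Local Notation chi a z := (sgnF2 R (dotF2 a z)).

Lemma N_neq0 : N != 0.
Proof. by rewrite expf_neq0 // pnatr_eq0. Qed.

(* Translating a by a unit vector e_i with y_i = 1 negates every term. *)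
Lemma sum_sgn_dotF2 (y : V) : \sum_a chi a y = if y == 0 then N else 0.
Proof.
have [->|y_neq0] := eqVneq y 0.
  under eq_bigr do rewrite dotF2r0.
  by rewrite sumr_const card_rvF2 natrX.
have [i yi] : exists i, y 0 i != 0.
  apply/existsP; apply: contraR y_neq0 => /existsPn y0.
  by apply/eqP/matrixP => r k; rewrite ord1 mxE; apply/eqP/negPn/y0.
have yi1 : y 0 i = 1 by case: (F2_cases (y 0 i)) yi => -> //; rewrite eqxx.
set S := \sum_a _; have S_opp : S = - S.
  rewrite {1}/S (reindex_inj (addIr (delta_mx 0 i))) /= -sumrN.
  by apply: eq_bigr => a _; rewrite dotF2Dl sgnF2D dotF2_delta yi1 mulrN1.
have : S *+ 2 == 0 by rewrite mulr2n {1}S_opp addNr.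
by rewrite mulrn_eq0 /= => /eqP.
Qed.

Definition acorr (h : V -> R) (y : V) : R := N^-1 * \sum_x h x * h (x + y).

Lemma fourier_acorr (h : V -> R) a : fourier (acorr h) a = fourier h a ^+ 2.
Proof.
rewrite /fourier /acorr expr2 mulrACA.
under eq_bigr do rewrite -mulrA.
rewrite -mulr_sumr [LHS]mulrA; congr (_ * _).
rewrite mulr_suml; under eq_bigr do rewrite mulr_suml.
rewrite exchange_big /=; apply: eq_bigr => x _.
rewrite (reindex_inj (addrI x)) /= mulr_sumr; apply: eq_bigr => y _.
rewrite addrA mxF2_addvv add0r dotF2Dr sgnF2D; ring.
Qed.

Lemma acorr_fourier_inv (h : V -> R) y :
  acorr h y = \sum_a fourier h a ^+ 2 * chi a y.
Proof.
under eq_bigr do rewrite -fourier_acorr /fourier -mulrA mulr_suml.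
rewrite -mulr_sumr exchange_big /=.
under eq_bigr do under eq_bigr do rewrite -mulrA -sgnF2D -dotF2Dr.
under eq_bigr do rewrite -mulr_sumr sum_sgn_dotF2 addr_eq0 mxF2_oppv.
rewrite (bigD1 y) //= eqxx big1 ?addr0 => [|z /negbTE ->]; last by rewrite mulr0.
by rewrite mulrCA mulVf ?mulr1 // N_neq0.
Qed.

Lemma mean_acorr_sqr (h : V -> R) :
  N^-1 * \sum_y acorr h y ^+ 2 = \sum_a fourier h a ^+ 4.
Proof.
under eq_bigr do rewrite expr2 {2}acorr_fourier_inv mulr_sumr.
rewrite exchange_big /= mulr_sumr; apply: eq_bigr => a _.
under eq_bigr do rewrite mulrCA.
by rewrite -mulr_sumr mulrCA -/(fourier (acorr h) a) fourier_acorr -exprD.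
Qed.

Lemma parseval (h : V -> R) : (forall x, h x * h x = 1) ->
  \sum_a fourier h a ^+ 2 = 1.
Proof.
move=> hh; under eq_bigr => a _ do rewrite -[_ ^+ 2]mulr1 -[1]/(sgnF2 R 0) -(dotF2r0 a).
rewrite -acorr_fourier_inv /acorr; under eq_bigr do rewrite addr0 hh.
by rewrite sumr_const card_rvF2 natrX mulVf // N_neq0.
Qed.

End Fourier.

Lemma sum_ord_pairs (M : nmodType) n (F : 'I_n -> 'I_n -> M) :
  \sum_(i < n) \sum_(j < n) F i j
  = \sum_(i < n) \sum_(j < n) (if (i < j)%N then F i j + F j i else 0) + \sum_(i < n) F i i.
Proof.
have split_ij (i j : 'I_n) : F i j = (if (i < j)%N then F i j else 0)
    + (if (j < i)%N then F i j else 0) + (if i == j then F i j else 0).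
  case: ltngtP => [h|h|/val_inj ->]; rewrite ?eqxx ?addr0 ?add0r //.
    by rewrite -val_eqE /= ltn_eqF ?addr0.
  by rewrite -val_eqE /= gtn_eqF ?addr0.
under eq_bigr do under eq_bigr do rewrite split_ij.
under eq_bigr do rewrite !big_split /=.
rewrite big_split /=; congr (_ + _).
  rewrite big_split /= [X in _ + X]exchange_big -big_split; apply: eq_bigr => i _.
  by rewrite -big_split; apply: eq_bigr => j _; case: ifP => _ /=; rewrite ?addr0.
apply: eq_bigr => i _.
by rewrite -big_mkcond /= (big_pred1 i) // => j; rewrite eq_sym.
Qed.

Definition qf n (B : 'M['F_2]_n) (x : 'rV['F_2]_n) : 'F_2 :=
  \sum_(i < n) \sum_(j < n) (if (i < j)%N then B i j * x 0 i * x 0 j else 0).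

Lemma matappE n (B : 'M['F_2]_n) y k : matapp B y 0 k = \sum_j B k j * y 0 j.
Proof. by rewrite /matapp !mxE; apply: eq_bigr => j _; rewrite mxE. Qed.

Lemma qf_polar n (B : 'M['F_2]_n) x y : B^T = B -> (forall i, B i i = 0) ->
  qf B (x + y) = qf B x + qf B y + dotF2 (matapp B y) x.
Proof.
move=> BT Bd; have Bsym i j : B j i = B i j by rewrite -{1}BT mxE.
have -> : dotF2 (matapp B y) x = \sum_i \sum_j B i j * y 0 j * x 0 i.
  by rewrite dotF2E; apply: eq_bigr => i _; rewrite matappE mulr_suml.
rewrite sum_ord_pairs [\sum_(i < n) B i i * _ * _]big1 ?addr0 => [|i _]; last first.
  by rewrite Bd !mul0r.
rewrite /qf -!big_split; apply: eq_bigr => i _; rewrite -!big_split.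
apply: eq_bigr => j _ /=; rewrite !mxE Bsym.
by case: ifP => _; [ring | rewrite !addr0].
Qed.

Definition quad_poly n (B : 'M['F_2]_n) (a : 'rV['F_2]_n) (b : 'F_2) : {mpoly 'F_2[n]} :=
  \sum_(i < n) \sum_(j < n) (if (i < j)%N then B i j *: ('X_i * 'X_j) else 0)
  + \sum_(i < n) a 0 i *: 'X_i + b%:MP.

Lemma meval_quad_poly n (B : 'M['F_2]_n) a b (x : 'rV['F_2]_n) :
  (quad_poly B a b).@[fun i => x ord0 i] = qf B x + dotF2 a x + b.
Proof.
rewrite !mevalD mevalC !raddf_sum /= dotF2E /qf; congr (_ + _ + _).
  apply: eq_bigr => i _; rewrite raddf_sum; apply: eq_bigr => j _ /=.
  case: ifP => _; last by rewrite meval0.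
  by rewrite mevalZ mevalM !mevalXU mulrA.
by apply: eq_bigr => i _; rewrite mevalZ mevalXU.
Qed.

Lemma quad_poly_is_quadratic n (B : 'M['F_2]_n) a b : is_quadratic (quad_poly B a b).
Proof.
pose low (p : {mpoly 'F_2[n]}) := (msize p <= 3)%N.
have lowD p q : low p -> low q -> low (p + q).
  by move=> lp lq; apply: leq_trans (msizeD_le _ _) _; rewrite geq_max; apply/andP.
have low0 : low 0 by rewrite /low msize0.
apply: (lowD); first apply: (lowD).
- apply: (big_ind low) => // i _; apply: (big_ind low) => // j _.
  case: ifP => _ //; apply: leq_trans (msizeZ_le _ _) _.
  by rewrite -mpolyXD msizeX mdegD !mdeg1.
- apply: (big_ind low) => // i _.
  by apply: leq_trans (msizeZ_le _ _) _; rewrite msizeX mdeg1.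
- by rewrite /low msizeC; case: (b != 0).
Qed.

Lemma exists_large_fourier (R : realFieldType) n (h : 'rV['F_2]_n -> R) eps :
  (forall x, h x * h x = 1) -> eps <= \sum_a fourier h a ^+ 4 ->
  exists a, eps <= `|fourier h a|.
Proof.
move=> hh heps; pose F a := `|fourier h a|.
have sqrF a : fourier h a ^+ 2 = F a ^+ 2 by rewrite real_normK ?num_real.
have sum1 : \sum_a F a ^+ 2 = 1.
  by rewrite -(parseval hh); apply: eq_bigr => a _; rewrite sqrF.
have [a0 _ Fmax] := @arg_maxP _ R _ 0 xpredT F isT.
exists a0; rewrite -/(F a0); set c := F a0.
have Fa0_le1 : c ^+ 2 <= 1.
  by rewrite -sum1 (bigD1 a0) //= lerDl sumr_ge0 // => a _; rewrite sqr_ge0.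
have : eps <= c ^+ 2.
  apply: (le_trans heps); rewrite -[c ^+ 2]mul1r -sum1 mulr_suml.
  apply: ler_sum => a _; rewrite -[4%N]/(2 * 2)%N exprM sqrF expr2 ler_wpM2l ?sqr_ge0 //.
  have Fa_le : F a <= c := Fmax a isT.
  have Fa_ge0 : 0 <= F a := normr_ge0 _.
  nra.
have c_ge0 : 0 <= c := normr_ge0 _.
nra.
Qed.

Definition twist (R : nzRingType) n (f : 'rV['F_2]_n -> R) (B : 'M['F_2]_n) x :=
  f x * sgnF2 R (qf B x).

Lemma twist_mulvv (R : comNzRingType) n (f : 'rV['F_2]_n -> R) B :
  (forall x, f x = 1 \/ f x = -1) -> forall x, twist f B x * twist f B x = 1.
Proof.
move=> f_pm x; rewrite /twist mulrACA sgnF2_mulvv mulr1.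
by case: (f_pm x) => ->; rewrite ?mulr1 ?mulrNN ?mulr1.
Qed.

Section Twist.
Variables (R : numFieldType) (n : nat) (f : 'rV['F_2]_n -> R) (B : 'M['F_2]_n).
Hypotheses (B_sym : B^T = B) (B_diag0 : forall i, B i i = 0).

Lemma fourier_fder_twist y :
  fourier (fder f y) (matapp B y) = sgnF2 R (qf B y) * acorr (twist f B) y.
Proof.
rewrite /acorr /fourier /fder /twist mulrCA; congr (_ * _).
rewrite mulr_sumr; apply: eq_bigr => x _; rewrite qf_polar // !sgnF2D.
have [sx2 sy2] := (sgnF2_mulvv R (qf B x), sgnF2_mulvv R (qf B y)).
by rewrite -[LHS]mul1r -{1}sx2 -[LHS]mul1r -{1}sy2; ring.
Qed.

Lemma corrB_twist : corrB f B = \sum_a fourier (twist f B) a ^+ 4.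
Proof.
rewrite /corrB -mean_acorr_sqr; congr (_ * _); apply: eq_bigr => y _.
by rewrite fourier_fder_twist exprMn expr2 sgnF2_mulvv mul1r.
Qed.

End Twist.

Lemma corr_quad_twist (R : numFieldType) n (f : 'rV['F_2]_n -> R) B a b :
  (2 ^+ n)^-1 * \sum_x f x * sgnF2 R (qf B x + dotF2 a x + b)
  = sgnF2 R b * fourier (twist f B) a.
Proof.
rewrite /fourier /twist [RHS]mulrCA [in RHS]mulr_sumr; congr (_ * _).
by apply: eq_bigr => x _; rewrite !sgnF2D; ring.
Qed.

Lemma indicator_neq_pm (R : realFieldType) (u v : R) :
  u = 1 \/ u = -1 -> v = 1 \/ v = -1 -> ((u != v)%:R : R) = (1 - u * v) / 2.
Proof.
have n1N1 : (1 == -1 :> R) = false by apply/eqP; lra.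
have nN11 : (-1 == 1 :> R) = false by apply/eqP; lra.
by case=> ->; case=> ->; rewrite ?eqxx ?n1N1 ?nN11 /=; field.
Qed.

Lemma dist_pmE (R : realFieldType) n (f g : 'rV['F_2]_n -> R) :
  (forall x, f x = 1 \/ f x = -1) -> (forall x, g x = 1 \/ g x = -1) ->
  dist f g = (1 - (2 ^+ n)^-1 * \sum_x f x * g x) / 2.
Proof.
move=> f_pm g_pm; rewrite /dist.
have -> : #|[set x | f x != g x]|%:R = \sum_x ((f x != g x)%:R : R).
  by rewrite -sumr_const big_mkcond /=; apply: eq_bigr => x _; rewrite inE; case: ifP.
under eq_bigr do rewrite indicator_neq_pm //.
rewrite -mulr_suml sumrB sumr_const card_rvF2 natrX.
by field; exact: N_neq0.
Qed.

Theorem corollary6p4 (R : realFieldType) (eps : R) :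
  0 < eps ->
  exists eps' : R, 0 < eps' /\
    forall (n : nat) (f : 'rV['F_2]_n -> R) (B : 'M['F_2]_n),
      (forall x, f x = 1 \/ f x = -1) ->
      B^T = B -> (forall i, B i i = 0) ->
      eps <= corrB f B ->
      exists P : {mpoly 'F_2[n]},
        is_quadratic P /\ dist f (quad_poly_fun R P) <= 2^-1 - eps'.
Proof.
move=> eps_gt0; exists (eps / 2); split; first by rewrite divr_gt0.
move=> n f B f_pm B_sym B_diag0 eps_le.
rewrite corrB_twist // in eps_le.
have [a a_large] := exists_large_fourier (twist_mulvv B f_pm) eps_le.
have [b b_sign] := sgnF2_norm (fourier (twist f B) a).
exists (quad_poly B a b); split; first exact: quad_poly_is_quadratic.
rewrite dist_pmE // => [|x]; last exact: sgnF2_pm.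
rewrite /quad_poly_fun; under eq_bigr do rewrite meval_quad_poly.
rewrite corr_quad_twist b_sign; lra.
Qed.
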